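(* Let $X=(X_1,\ldots,X_n)$ be a real random vector with finite support, $Q=[q_{ij}]\in\mathbb{R}^{m\times n}$ and $\tilde X=QX\in\mathbb{R}^m$. For each $d\ge1$ let $L_d$ be a partition lattice of $[d]$ with Möbius function $\mathfrak{m}_d$, and define the $n\times\cdots\times n$ tensor $$\mathcal{L}^{(d)}_{i_1\cdots i_d}=\sum_{\pi\in L_d}\mathfrak{m}_d(\pi,[d])\prod_{B\in\pi}\mathbb{E}\Big[\prod_{b\in B}X_{i_b}\Big],\qquad (i_1,\ldots,i_d)\in[n]^d,$$ and analogously the $m\times\cdots\times m$ tensor $\tilde{\mathcal{L}}^{(d)}$ from $\tilde X$. Then for every $d\ge1$ and $i_1,\ldots,i_d\in[m]$, $$\tilde{\mathcal{L}}^{(d)}_{i_1\cdots i_d}=\sum_{j_1=1}^n\cdots\sum_{j_d=1}^n q_{i_1j_1}\cdots q_{i_dj_d}\,\mathcal{L}^{(d)}_{j_1\cdots j_d}.$$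
   Context: A partition lattice of $[d]$ is a subset of the set of set partitions of $[d]$ containing the one-block partition $[d]$ and the finest partition $1|\cdots|d$ which is a lattice under the refinement order. The Möbius function of a finite poset is given by $\mathfrak{m}(\pi,\pi)=1$, $\mathfrak{m}(\pi,\nu)=-\sum_{\pi\le\delta<\nu}\mathfrak{m}(\pi,\delta)$ for $\pi<\nu$, $0$ otherwise. *)

From HB Require Import structures.
From mathcomp Require Import all_boot all_order all_algebra.
Set Implicit Arguments. Unset Strict Implicit. Unset Printing Implicit Defensive.
Import Order.TTheory GRing.Theory Num.Theory.
Local Open Scope ring_scope.

(* Set partitions of [d] = 'I_d are P : {set {set 'I_d}} with partition P setT. *)

Definition refines (d : nat) (pi nu : {set {set 'I_d}}) : bool :=
  [forall B in pi, exists C in nu, B \subset C].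

Definition one_block (d : nat) : {set {set 'I_d}} := [set [set: 'I_d]].
Definition finest (d : nat) : {set {set 'I_d}} := [set [set i] | i : 'I_d].

Definition is_partition_lattice (d : nat) (L : {set {set {set 'I_d}}}) : Prop :=
  [/\ (forall pi, pi \in L -> partition pi [set: 'I_d]),
      one_block d \in L, finest d \in L,
      (forall pi nu, pi \in L -> nu \in L -> exists2 mu, mu \in L &
         [/\ refines mu pi, refines mu nu &
             forall de, de \in L -> refines de pi -> refines de nu -> refines de mu])
    & (forall pi nu, pi \in L -> nu \in L -> exists2 mu, mu \in L &
         [/\ refines pi mu, refines nu mu &
             forall de, de \in L -> refines pi de -> refines nu de -> refines mu de])].

Fixpoint mobius_fuel (R : nzRingType) (d : nat) (L : {set {set {set 'I_d}}})
    (k : nat) (pi nu : {set {set 'I_d}}) : R :=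
  match k with
  | 0 => 0
  | k'.+1 =>
    if pi == nu then 1
    else if refines pi nu then
      - \sum_(de in L | refines pi de && (de != nu) && refines de nu)
          mobius_fuel R L k' pi de
    else 0
  end.

(* the fuel #|L| bounds the length of any strict chain in L *)
Definition mobius (R : nzRingType) (d : nat) (L : {set {set {set 'I_d}}})
    (pi nu : {set {set 'I_d}}) : R :=
  mobius_fuel R L #|L| pi nu.

(* Finite-support random vector: finite sample space Om with probability
   weights p, and X : Om -> R^n.  E[ prod_{b in B} X_{i_b} ]: *)
Definition moment (R : nzRingType) (Om : finType) (p : Om -> R) (n d : nat)
    (X : Om -> 'I_n -> R) (i : 'I_d -> 'I_n) (B : {set 'I_d}) : R :=
  \sum_(w : Om) p w * \prod_(b in B) X w (i b).

Definition Lcum (R : nzRingType) (Om : finType) (p : Om -> R) (n d : nat)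
    (L : {set {set {set 'I_d}}}) (X : Om -> 'I_n -> R) (i : 'I_d -> 'I_n) : R :=
  \sum_(pi in L) mobius R L pi (one_block d) * \prod_(B in pi) moment p X i B.

Definition transform (R : nzRingType) (Om : finType) (m n : nat)
    (Q : 'M[R]_(m, n)) (X : Om -> 'I_n -> R) : Om -> 'I_m -> R :=
  fun w i => \sum_(j < n) Q i j * X w j.

From HB Require Import structures.
From mathcomp Require Import all_boot all_order all_algebra.
Import Order.TTheory GRing.Theory Num.Theory.
Set Implicit Arguments. Unset Strict Implicit. Unset Printing Implicit Defensive.
Local Open Scope ring_scope.

(* Expanding each moment as a sum over sample points, the product of the
   moments over the blocks of a partition pi becomes one sum, over the ways of
   attaching a sample point W B to every block B, of the product over k of the
   coordinates Y (W (block of k)) (i k).  That product is multilinear in the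
   coordinates, so substituting QX for Y pulls out q_{i_1 j_1} ... q_{i_d j_d};
   the Moebius coefficients do not involve X at all. *)

Section Moments.

Variables (R : comNzRingType) (Om : finType) (p : Om -> R).

(* Blocks outside pi are sent to the dummy point w0 with weight 1, so that the
   sum can range over all functions {set 'I_d} -> Om. *)
Lemma prod_moment_partition (w0 : Om) (n d : nat) (pi : {set {set 'I_d}})
    (Y : Om -> 'I_n -> R) (i : 'I_d -> 'I_n) (pi_part : partition pi [set: 'I_d]) :
  \prod_(B in pi) moment p Y i B =
  \sum_(W : {ffun {set 'I_d} -> Om})
     (\prod_(B : {set 'I_d}) (if B \in pi then p (W B) else (W B == w0)%:R)) *
     \prod_(k : 'I_d) Y (W (pblock pi k)) (i k).
Proof.
have pi_triv : trivIset pi by case/and3P: pi_part.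
rewrite big_mkcond /=.
transitivity (\prod_(B : {set 'I_d}) \sum_(w : Om)
   ((if B \in pi then p w else (w == w0)%:R) *
    (if B \in pi then \prod_(b in B) Y w (i b) else 1))).
  apply: eq_bigr => B _; case: ifP => // _.
  rewrite (bigD1 w0) //= eqxx mulr1 big1 ?addr0 // => w /negbTE ->.
  by rewrite mul0r.
rewrite bigA_distr_bigA; apply: eq_bigr => W _.
rewrite big_split /= -big_mkcond /=; congr (_ * _).
transitivity (\prod_(B in pi) \prod_(b in B) Y (W (pblock pi b)) (i b)).
  apply: eq_bigr => B B_pi; apply: eq_bigr => b b_B.
  by rewrite (def_pblock pi_triv B_pi b_B).
by rewrite -(set_partition_big _ pi_part); apply: eq_bigl => k; rewrite inE.
Qed.

Variables (m n : nat) (Q : 'M[R]_(m, n)) (X : Om -> 'I_n -> R).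

Lemma prod_transform (d : nat) (ws : 'I_d -> Om) (i : 'I_d -> 'I_m) :
  \prod_(k < d) transform Q X (ws k) (i k) =
  \sum_(j : {ffun 'I_d -> 'I_n})
     (\prod_(k < d) Q (i k) (j k)) * \prod_(k < d) X (ws k) (j k).
Proof.
by rewrite bigA_distr_bigA; apply: eq_bigr => j _; rewrite big_split.
Qed.

Lemma prod_moment_transform (w0 : Om) (d : nat) (pi : {set {set 'I_d}})
    (i : 'I_d -> 'I_m) (pi_part : partition pi [set: 'I_d]) :
  \prod_(B in pi) moment p (transform Q X) i B =
  \sum_(j : {ffun 'I_d -> 'I_n})
     (\prod_(k < d) Q (i k) (j k)) * \prod_(B in pi) moment p X j B.
Proof.
rewrite (prod_moment_partition w0 _ _ pi_part).
under eq_bigr do rewrite prod_transform big_distrr /=.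
rewrite exchange_big /=; apply: eq_bigr => j _.
rewrite (prod_moment_partition w0 _ _ pi_part) big_distrr /=.
by apply: eq_bigr => W _; rewrite mulrCA.
Qed.

Lemma Lcum_transform (w0 : Om) (d : nat) (L : {set {set {set 'I_d}}})
    (i : 'I_d -> 'I_m) (L_part : forall pi, pi \in L -> partition pi [set: 'I_d]) :
  Lcum p L (transform Q X) i =
  \sum_(j : {ffun 'I_d -> 'I_n}) (\prod_(k < d) Q (i k) (j k)) * Lcum p L X j.
Proof.
rewrite /Lcum.
under [RHS]eq_bigr do rewrite big_distrr.
rewrite [RHS]exchange_big /=; apply: eq_bigr => pi pi_L.
rewrite (prod_moment_transform w0 _ (L_part pi pi_L)) big_distrr /=.
by apply: eq_bigr => j _; rewrite mulrCA.
Qed.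

End Moments.

Theorem proposition5p7 (R : realFieldType) (Om : finType) (p : Om -> R)
  (p_ge0 : forall w, 0 <= p w) (p_sum1 : \sum_(w : Om) p w = 1)
  (m n : nat) (X : Om -> 'I_n -> R) (Q : 'M[R]_(m, n))
  (d : nat) (hd : (0 < d)%N) (L : {set {set {set 'I_d}}})
  (hL : is_partition_lattice L) (i : 'I_d -> 'I_m) :
  Lcum p L (transform Q X) i =
  \sum_(j : {ffun 'I_d -> 'I_n}) (\prod_(k < d) Q (i k) (j k)) * Lcum p L X j.
Proof.
have [w0 _] : exists w : Om, true.
  case: (pickP Om) => [w _|Om_empty]; first by exists w.
  by move: p_sum1; rewrite big_pred0 // => /eqP; rewrite eq_sym oner_eq0.
case: hL => L_part _ _ _ _.
exact: (Lcum_transform p Q X w0 i L_part).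
Qed.
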